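(* Let $\mathfrak g$ be a finite-dimensional Lie algebra over a field $\mathbb K$ of characteristic zero, and let $\mathfrak h_m=V\oplus\mathbb K e\subset\mathfrak g$ be an ideal isomorphic to the Heisenberg algebra, such that the center of $\mathfrak g$ coincides with the center $\mathbb K e$ of $\mathfrak h_m$. Then there exists a subalgebra $\mathfrak b\subset\mathfrak g$ such that $\mathfrak g=\mathfrak b\oplus V$ (direct sum of vector spaces) and $\mathfrak b\cap\mathfrak h_m=\mathbb K e$. Moreover $V$ is invariant under $\operatorname{ad}_\beta$ for all $\beta\in\mathfrak b$, and each $\operatorname{ad}_\beta|_V$ lies in the symplectic Lie algebra $sp(V,\omega)$.
   Context: The Heisenberg structure: $\dim V=2m$, $e$ central in $\mathfrak h_m$, and $[\xi_1,\xi_2]=\omega(\xi_1,\xi_2)e$ for $\xi_1,\xi_2\in V$, where $\omega$ is a symplectic form on $V$. *)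

From HB Require Import structures.
From mathcomp Require Import all_boot all_order all_algebra.
Set Implicit Arguments. Unset Strict Implicit. Unset Printing Implicit Defensive.
Import GRing.Theory.
Local Open Scope ring_scope.

Section LieDefs.
Variables (K : fieldType) (L : vectType K).

Definition is_lie_bracket (br : L -> L -> L) : Prop :=
  [/\ (forall (a : K) (x y z : L), br (a *: x + y) z = a *: br x z + br y z),
      (forall (a : K) (x y z : L), br z (a *: x + y) = a *: br z x + br z y),
      (forall x : L, br x x = 0) &
      (forall x y z : L, br x (br y z) + br y (br z x) + br z (br x y) = 0)].

Definition lie_subalgebra (br : L -> L -> L) (B : {vspace L}) : Prop :=
  forall x y, x \in B -> y \in B -> br x y \in B.

Definition lie_ideal (br : L -> L -> L) (I : {vspace L}) : Prop :=
  forall x y, x \in I -> br y x \in I.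

Definition lie_central (br : L -> L -> L) (x : L) : Prop :=
  forall y, br x y = 0.

Definition symplectic_on (V : {vspace L}) (omega : L -> L -> K) : Prop :=
  [/\ (forall (a : K) (x y z : L), x \in V -> y \in V -> z \in V ->
         omega (a *: x + y) z = a * omega x z + omega y z),
      (forall (a : K) (x y z : L), x \in V -> y \in V -> z \in V ->
         omega z (a *: x + y) = a * omega z x + omega z y),
      (forall x, x \in V -> omega x x = 0) &
      (forall x, x \in V -> (forall y, y \in V -> omega x y = 0) -> x = 0)].

Definition heisenberg_ideal (br : L -> L -> L) (m : nat) (V : {vspace L})
    (e : L) (omega : L -> L -> K) (H : {vspace L}) : Prop :=
  [/\ H = (V + <[e]>)%VS, directv (V + <[e]>)%VS, e != 0 &
      \dim V = (2 * m)%N] /\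
  [/\ symplectic_on V omega,
      (forall x, x \in H -> br e x = 0),
      (forall x y, x \in V -> y \in V -> br x y = omega x y *: e) &
      lie_ideal br H].

End LieDefs.

(* Take for b the normalizer {x | [x, V] <= V} of V.  It is a subalgebra by
   Jacobi, and Jacobi again, together with the centrality of e, shows that
   ad_b acts on V by elements of sp(V, omega).  If v in V normalizes V then
   omega(v, y) e = [v, y] lies in V for all y in V, so nondegeneracy forces
   v = 0; this gives b /\ V = 0 and b /\ h_m = K e.  Finally, for any x the
   e-component of [x, y] (y in V) is a linear form on V, hence equals
   omega(v, -) for some v in V, and then x - v normalizes V: b + V = g. *)

From HB Require Import structures.
From mathcomp Require Import all_boot all_order all_algebra.
Set Implicit Arguments. Unset Strict Implicit. Unset Printing Implicit Defensive.
Import GRing.Theory.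
Local Open Scope ring_scope.

Section LinearOn.
Variables (K : fieldType) (aT rT : vectType K).

Lemma linfun_linearE (f : aT -> rT) : linear f -> linfun f =1 f.
Proof.
move=> f_lin.
pose F : {linear aT -> rT} := HB.pack f (GRing.isLinear.Build _ _ _ _ f f_lin).
exact: (lfunE F).
Qed.

Definition linear_on (U : {vspace aT}) (f : aT -> rT) : Prop :=
  forall a x y, x \in U -> y \in U -> f (a *: x + y) = a *: f x + f y.

Lemma linear_comp_projv U f : linear_on U f -> linear (f \o projv U).
Proof. by move=> f_lin a x y /=; rewrite linearP f_lin ?memv_proj. Qed.

Lemma linear_on_vbasis_eq U f g : linear_on U f -> linear_on U g ->
  {in vbasis U, f =1 g} -> {in U, f =1 g}.
Proof.
move=> f_lin g_lin fg_basis u uU.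
pose d := (linfun (f \o projv U) - linfun (g \o projv U))%VF.
have dE x : d x = f (projv U x) - g (projv U x).
  by rewrite add_lfunE opp_lfunE !linfun_linearE //; apply: linear_comp_projv.
have U_ker : (U <= lker d)%VS.
  case/andP: (vbasisP U) => /eqP <- _; apply/span_subvP => b bU.
  by rewrite memv_ker dE projv_id ?fg_basis ?subrr ?vbasis_mem.
by apply/eqP; rewrite -subr_eq0 -(projv_id uU) -dE -memv_ker (subvP U_ker).
Qed.

End LinearOn.

Section NondegenerateForm.
Variables (K : fieldType) (L : vectType K) (V : {vspace L}) (omega : L -> L -> K).
Hypothesis omega_linearl : forall a x y z, x \in V -> y \in V -> z \in V ->
  omega (a *: x + y) z = a * omega x z + omega y z.
Hypothesis omega_linearr : forall a x y z, x \in V -> y \in V -> z \in V ->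
  omega z (a *: x + y) = a * omega z x + omega z y.
Hypothesis omega_nondeg : forall x, x \in V ->
  (forall y, y \in V -> omega x y = 0) -> x = 0.

Lemma nondegenerate_form_represents (f : L -> K^o) : linear_on V f ->
  exists2 v, v \in V & {in V, f =1 omega v}.
Proof.
(* The Gram map v |-> (omega v b_i)_i is injective on V, hence onto. *)
move=> f_lin; pose b := vbasis V.
have omega_lin v : v \in V -> linear_on V (omega v : L -> K^o).
  by move=> vV a x y xV yV; exact: omega_linearr.
pose gram := linfun (fun v => \row_(i < \dim V) omega (projv V v) (tnth b i)).
have gramE v : gram v = \row_(i < \dim V) omega (projv V v) (tnth b i).
  apply: linfun_linearE => a x y; apply/rowP => i.
  by rewrite !mxE linearP omega_linearl ?memv_proj ?(vbasis_mem (mem_tnth i b)).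
have gram_inj : (V :&: lker gram = 0)%VS.
  apply/eqP; rewrite -subv0; apply/subvP => v /memv_capP[vV].
  rewrite memv_ker gramE projv_id // memv0 => /eqP/rowP gram0.
  apply/eqP/omega_nondeg => //.
  apply: (linear_on_vbasis_eq (omega_lin v vV)) => //.
    by move=> a x y _ _; rewrite scaler0 addr0.
  by move=> _ /tnthP[i ->]; have := gram0 i; rewrite !mxE.
have gram_onto : (gram @: V)%VS = fullv.
  by apply/eqP; rewrite eqEdim subvf dimvf limg_dim_eq //= dim_matrix mul1r.
have : \row_(i < \dim V) (f (tnth b i) : K) \in (gram @: V)%VS.
  by rewrite gram_onto memvf.
case/memv_imgP=> v vV; rewrite gramE projv_id // => /rowP f_gram.
exists v => //; apply: linear_on_vbasis_eq (omega_lin v vV) _ => //.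
by move=> _ /tnthP[i ->]; have := f_gram i; rewrite !mxE.
Qed.

Lemma alternating_form_skew x y : x \in V -> y \in V ->
  (forall u, u \in V -> omega u u = 0) -> omega x y = - omega y x.
Proof.
move=> xV yV omega_alt.
have omegaDl u w z : u \in V -> w \in V -> z \in V ->
    omega (u + w) z = omega u z + omega w z.
  by move=> uV wV zV; have := omega_linearl 1 uV wV zV; rewrite scale1r mul1r.
have omegaDr u w z : u \in V -> w \in V -> z \in V ->
    omega z (u + w) = omega z u + omega z w.
  by move=> uV wV zV; have := omega_linearr 1 uV wV zV; rewrite scale1r mul1r.
apply/eqP; rewrite -addr_eq0; apply/eqP.
have := omega_alt (x + y) (memvD xV yV).
by rewrite omegaDl ?memvD // !omegaDr // !omega_alt // add0r addr0.
Qed.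

End NondegenerateForm.

Section LieAlgebra.
Variables (K : fieldType) (L : vectType K) (br : L -> L -> L).
Hypothesis br_lie : is_lie_bracket br.

Lemma lie_linearl a x y z : br (a *: x + y) z = a *: br x z + br y z.
Proof. by case: br_lie. Qed.

Lemma lie_linearr a x y z : br z (a *: x + y) = a *: br z x + br z y.
Proof. by case: br_lie. Qed.

Lemma lie0l z : br 0 z = 0.
Proof.
have := lie_linearl 1 0 0 z; rewrite !scale1r addr0 => /esym/eqP.
by rewrite -subr_eq0 addrK => /eqP.
Qed.

Lemma lie0r z : br z 0 = 0.
Proof.
have := lie_linearr 1 0 0 z; rewrite !scale1r addr0 => /esym/eqP.
by rewrite -subr_eq0 addrK => /eqP.
Qed.

Lemma lieZl a x z : br (a *: x) z = a *: br x z.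
Proof. by rewrite -[a *: x]addr0 lie_linearl lie0l addr0. Qed.

Lemma lieZr a x z : br z (a *: x) = a *: br z x.
Proof. by rewrite -[a *: x]addr0 lie_linearr lie0r addr0. Qed.

Lemma lieDl x y z : br (x + y) z = br x z + br y z.
Proof. by have := lie_linearl 1 x y z; rewrite !scale1r. Qed.

Lemma lieBl x y z : br (x - y) z = br x z - br y z.
Proof. by rewrite lieDl -scaleN1r lieZl scaleN1r. Qed.

Lemma lieNr x z : br z (- x) = - br z x.
Proof. by rewrite -scaleN1r lieZr scaleN1r. Qed.

Lemma lie_anti x y : br x y = - br y x.
Proof.
case: br_lie => _ _ alt _; apply/eqP; rewrite -addr_eq0; have := alt (x + y).
rewrite lieDl -[x]scale1r !lie_linearr !scale1r !alt add0r addr0.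
by move=> ->.
Qed.

Variable V : {vspace L}.

Definition lie_normalizer : {vspace L} :=
  lker (linfun (fun x => ((\1 - projv V) \o linfun (br x) \o projv V)%VF)).

Lemma mem_lie_normalizer x :
  x \in lie_normalizer <-> (forall y, y \in V -> br x y \in V).
Proof.
have adE u y : linfun (br u) y = br u y.
  by apply: linfun_linearE => a v w; exact: lie_linearr.
have normE : linfun (fun x => ((\1 - projv V) \o linfun (br x) \o projv V)%VF) x =
             ((\1 - projv V) \o linfun (br x) \o projv V)%VF.
  apply: linfun_linearE => a u w; apply/lfunP => y.
  by rewrite add_lfunE scale_lfunE !comp_lfunE !adE lie_linearl linearP.
have inV w : (w - projv V w == 0) = (w \in V).
  by rewrite subr_eq0; apply/eqP/idP => [->|/projv_id ->]; rewrite ?memv_proj.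
rewrite memv_ker normE; split=> [/eqP/lfunP x_norm y yV | x_norm].
  have := x_norm y; rewrite zero_lfunE !comp_lfunE adE projv_id //.
  by rewrite add_lfunE opp_lfunE id_lfunE -inV => ->.
apply/eqP/lfunP => y; rewrite zero_lfunE !comp_lfunE adE.
by rewrite add_lfunE opp_lfunE id_lfunE; apply/eqP; rewrite inV x_norm ?memv_proj.
Qed.

Lemma lie_normalizer_subalgebra : lie_subalgebra br lie_normalizer.
Proof.
case: br_lie => _ _ _ jacobi x y /mem_lie_normalizer xN /mem_lie_normalizer yN.
apply/mem_lie_normalizer => z zV.
have := jacobi x y z; rewrite (lie_anti z (br x y)) (lie_anti z x) lieNr.
move/eqP; rewrite subr_eq0 => /eqP <-.
by apply: memvB; [exact/xN/yN | exact/yN/xN].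
Qed.

Section HeisenbergIdeal.
Variables (e : L) (omega : L -> L -> K) (H : {vspace L}).
Hypothesis omega_symplectic : symplectic_on V omega.
Hypothesis e_neq0 : e != 0.
Hypothesis V_cap_e : (V :&: <[e]> = 0)%VS.
Hypothesis e_central : forall y, br e y = 0.
Hypothesis lieV : forall x y, x \in V -> y \in V -> br x y = omega x y *: e.
Hypothesis H_def : H = (V + <[e]>)%VS.
Hypothesis H_ideal : lie_ideal br H.

Lemma e_notin_V : e \notin V.
Proof.
apply/negP=> eV; move/negP: e_neq0; apply.
by rewrite -memv0 -V_cap_e memv_cap eV memv_line.
Qed.

Lemma lie_normalizer_capV : (lie_normalizer :&: V = 0)%VS.
Proof.
case: omega_symplectic => _ _ _ omega_nondeg.
apply/eqP; rewrite -subv0; apply/subvP => v /memv_capP[/mem_lie_normalizer vN vV].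
rewrite memv0; apply/eqP/omega_nondeg => // y yV; have := vN y yV; rewrite lieV //.
have [//|omega_neq0] := eqVneq (omega v y) 0.
by move/(memvZ (omega v y)^-1); rewrite scalerA mulVf // scale1r (negPf e_notin_V).
Qed.

Lemma lie_normalizer_symplectic b x y :
  b \in lie_normalizer -> x \in V -> y \in V ->
  omega (br b x) y + omega x (br b y) = 0.
Proof.
case: omega_symplectic => omega_linl omega_linr omega_alt _.
move=> /mem_lie_normalizer bN xV yV; case: br_lie => _ _ _ jacobi.
have := jacobi b x y.
rewrite (lieV xV yV) lieZr (lie_anti b e) e_central oppr0 scaler0 add0r.
have bxV := bN x xV; have byV := bN y yV.
rewrite (lie_anti y b) lieNr (lieV xV byV) (lieV yV bxV).
rewrite (alternating_form_skew omega_linl omega_linr yV bxV omega_alt).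
move/eqP; rewrite -scaleNr -scalerDl scaler_eq0 (negPf e_neq0) orbF.
by rewrite -opprD oppr_eq0 addrC => /eqP.
Qed.

Lemma e_in_lie_normalizer : e \in lie_normalizer.
Proof. by apply/mem_lie_normalizer => y _; rewrite e_central mem0v. Qed.

Lemma lie_normalizer_capH : (lie_normalizer :&: H)%VS = <[e]>%VS.
Proof.
have eH : (<[e]> <= H)%VS by rewrite H_def addvSr.
apply/vspaceP => z; apply/idP/idP => [|ze]; last first.
  rewrite memv_cap (subvP eH) // andbT.
  by case/vlineP: ze => c ->; rewrite memvZ ?e_in_lie_normalizer.
case/memv_capP=> zN; rewrite H_def => /memv_addP[v vV [_ /vlineP[c ->] z_def]].
have vN : v \in lie_normalizer.
  by rewrite -(addrK (c *: e) v) -z_def memvB ?memvZ ?e_in_lie_normalizer.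
have v0 : v = 0 by apply/eqP; rewrite -memv0 -lie_normalizer_capV memv_cap vN.
by rewrite z_def v0 add0r memvZ ?memv_line.
Qed.

Lemma lie_normalizer_addV : (lie_normalizer + V)%VS = fullv.
Proof.
case: omega_symplectic => omega_linl omega_linr _ omega_nondeg.
have coord_e w : w \in <[e]>%VS -> w = coord [tuple e] 0 w *: e.
  case/vlineP=> k ->; rewrite linearZ /=.
  by rewrite (coord_free (X := [tuple e]) 0 0) ?seq1_free // eqxx mulr1.
apply/vspaceP => x; rewrite memvf; apply/memv_addP.
pose e_coord y : K^o := coord [tuple e] 0 (daddv_pi <[e]> V (br x y)).
have e_coord_lin : linear_on V e_coord.
  by move=> a y z _ _; rewrite /e_coord lie_linearr !linearP.
have [v vV omega_v] :=
  nondegenerate_form_represents omega_linl omega_linr omega_nondeg e_coord_lin.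
exists (x - v); last by exists v; rewrite // subrK.
apply/mem_lie_normalizer => y yV.
have xyH : br x y \in (V + <[e]>)%VS.
  by rewrite -H_def; apply: H_ideal; rewrite H_def (subvP (addvSl V <[e]>)).
rewrite lieBl (lieV vV yV) -omega_v // /e_coord -coord_e ?memv_pi //.
by rewrite -{1}(daddv_pi_add V_cap_e xyH) addrK memv_pi.
Qed.

End HeisenbergIdeal.

End LieAlgebra.

Theorem lemma6 (K : fieldType) (L : vectType K) (br : L -> L -> L)
    (m : nat) (V : {vspace L}) (e : L) (omega : L -> L -> K) (H : {vspace L}) :
  [pchar K] =i pred0 ->
  is_lie_bracket br ->
  heisenberg_ideal br m V e omega H ->
  (forall x : L, lie_central br x <-> x \in <[e]>%VS) ->
  exists B : {vspace L},
    [/\ lie_subalgebra br B,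
        (B + V)%VS = fullv,
        directv (B + V)%VS &
        (B :&: H)%VS = <[e]>%VS] /\
    [/\ (forall b x, b \in B -> x \in V -> br b x \in V) &
        (forall b x y, b \in B -> x \in V -> y \in V ->
           omega (br b x) y + omega x (br b y) = 0)].
Proof.
move=> _ br_lie [[H_def /directv_addP V_cap_e e_neq0 _] [omega_sympl _ lieV H_ideal]].
move=> center; have e_central : lie_central br e by apply/center/memv_line.
exists (lie_normalizer br V); split; split.
- exact: lie_normalizer_subalgebra.
- exact: (lie_normalizer_addV br_lie omega_sympl e_neq0 V_cap_e lieV H_def H_ideal).
- exact/directv_addP/(lie_normalizer_capV br_lie omega_sympl e_neq0 V_cap_e lieV).
- exact: (lie_normalizer_capH br_lie omega_sympl e_neq0 V_cap_e e_central lieV H_def).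
- by move=> b x /(mem_lie_normalizer br_lie); apply.
- exact: (lie_normalizer_symplectic br_lie omega_sympl e_neq0 e_central lieV).
Qed.
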